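(* Let $R$ be a ring, $S$ a right Ore set of $R$, and $\mathfrak{a}=\mathrm{ass}_R(S)$. Then \begin{enumerate} \item $S$ is a right localizable set of $R$ if and only if $\mathfrak{a}'\neq R$, where $\mathfrak{a}'=\mathfrak{a}'(S)$. \item Suppose $\mathfrak{a}'\neq R$. Let $\pi':R\to R':=R/\mathfrak{a}'$, $r\mapsto r'=r+\mathfrak{a}'$, and $S'=\pi'(S)$. Then \begin{enumerate} \item $S'$ is a right denominator set of $R'$; \item $\mathfrak{a}=(\pi')^{-1}(\mathrm{ass}_r(S'))$; \item $R\langle S^{-1}\rangle\simeq R'S'^{-1}$, an $R$-isomorphism. \end{enumerate} \end{enumerate}
   Context: Rings are associative with $1$. Multiplicative set: $SS\subseteq S$, $1\in S$, $0\notin S$. Right Ore set: $rS\cap sR\ne\emptyset$ for all $r\in R,s\in S$; right denominator set: right Ore and $sr=0$ ($s\in S$) implies $rt=0$ for some $t\in S$; $AT^{-1}$ denotes the right Ore localization. $\mathrm{ass}_r(T)=\{a: at=0\text{ for some } t\in T\}$. $R\langle S^{-1}\rangle=R\langle X_S\rangle/I_S$ ($R\langle X_S\rangle$ freely generated by $R$ and noncommuting $x_s$; $I_S$ generated by $sx_s-1,x_ss-1$); $\mathrm{ass}_R(S)=\ker(R\to R\langle S^{-1}\rangle)$. $S$ is right localizable if $R\langle S^{-1}\rangle\ne0$ and every element has the form $(r+I_S)(x_s+I_S)$. For a ring $A$, $\mathcal{C}'_A=\{r\in A:rx=0\Rightarrow x=0\}$; $\mathfrak{a}'(S)$ is the least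 ideal $\mathfrak{b}$ of $R$ such that the image of $S$ in $R/\mathfrak{b}$ lies in $\mathcal{C}'_{R/\mathfrak{b}}$ (it exists). *)

From HB Require Import structures.
From mathcomp Require Import all_boot all_algebra.
Set Implicit Arguments. Unset Strict Implicit. Unset Printing Implicit Defensive.
Import GRing.Theory.
Local Open Scope ring_scope.

Definition mult_set (R : pzRingType) (S : R -> Prop) : Prop :=
  S 1 /\ ~ S 0 /\ (forall a b, S a -> S b -> S (a * b)).

Definition right_Ore (R : pzRingType) (S : R -> Prop) : Prop :=
  mult_set S /\
  (forall r s, S s -> exists s' r', S s' /\ r * s' = s * r').

Definition right_denominator (R : pzRingType) (S : R -> Prop) : Prop :=
  right_Ore S /\
  (forall s r, S s -> s * r = 0 -> exists t, S t /\ r * t = 0).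

Definition ass_r (R : pzRingType) (T : R -> Prop) : R -> Prop :=
  fun a => exists t, T t /\ a * t = 0.

Definition is_inverse (A : pzRingType) (x y : A) : Prop :=
  x * y = 1 /\ y * x = 1.

Definition inverts (R A : pzRingType) (f : R -> A) (S : R -> Prop) : Prop :=
  forall s, S s -> exists y, is_inverse (f s) y.

(* (L, iota) is the universal S-inverting ring R<S^{-1}> = R<X_S>/I_S
   (characterized by its universal property: any ring morphism inverting S
   factors uniquely through iota). ass_R(S) = ker iota. *)
Definition universal_inverting (R : pzRingType) (S : R -> Prop)
    (L : pzRingType) (iota : {rmorphism R -> L}) : Prop :=
  inverts iota S /\
  forall (B : pzRingType) (f : {rmorphism R -> B}), inverts f S ->
    exists g : {rmorphism L -> B},
      (forall r, g (iota r) = f r) /\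
      (forall g' : {rmorphism L -> B}, (forall r, g' (iota r) = f r) ->
         forall x, g' x = g x).

Definition right_localizable (R : pzRingType) (S : R -> Prop)
    (L : pzRingType) (iota : {rmorphism R -> L}) : Prop :=
  (1 : L) <> 0 /\
  forall q : L, exists r s y, S s /\ is_inverse (iota s) y /\ q = iota r * y.

Definition ideal (R : pzRingType) (b : R -> Prop) : Prop :=
  b 0 /\ (forall x y, b x -> b y -> b (x - y)) /\
  (forall r x, b x -> b (r * x) /\ b (x * r)).

(* a'(S): the least ideal b such that the image of S in R/b lies in
   C'_{R/b}, i.e. s x ∈ b implies x ∈ b for s ∈ S (intersection of all such) *)
Definition aprime (R : pzRingType) (S : R -> Prop) : R -> Prop :=
  fun r => forall b : R -> Prop, ideal b ->
    (forall s x, S s -> b (s * x) -> b x) -> b r.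

Definition right_Ore_localization (A : pzRingType) (T : A -> Prop)
    (Q : pzRingType) (sigma : {rmorphism A -> Q}) : Prop :=
  inverts sigma T /\
  (forall q : Q, exists a t y, T t /\ is_inverse (sigma t) y /\ q = sigma a * y) /\
  (forall a, sigma a = 0 <-> ass_r T a).

(* Let N be the set of r with r u in a'(S) for some u in S. As a'(S) is an ideal
   modulo which S is left regular, the Ore condition makes N an ideal modulo which
   S is left and right regular. Right fractions a s^-1 (s in S) modulo N then form
   a ring Q; the map R -> Q inverts S and has kernel N, and every S-inverting
   morphism kills N, hence factors through Q. Going from R<S^-1> to Q and back is
   the identity, so every element of R<S^-1> is a right fraction and
   ass_R(S) = N. Everything follows: R<S^-1> <> 0 iff 1 is not in N iff
   a'(S) <> R; N is the preimage of ass_r(S'), which makes S' a right denominator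
   set; and fractions with the same kernel identify R'S'^-1 with R<S^-1>. *)

From HB Require Import structures.
From mathcomp Require Import all_boot all_algebra.
From mathcomp Require Import boolp classical_sets.
Set Implicit Arguments.
Unset Strict Implicit.
Unset Printing Implicit Defensive.
Import GRing.Theory.
Local Open Scope ring_scope.
Local Open Scope quotient_scope.

Section Inverses.
Variable A : pzRingType.
Implicit Types x y z : A.

Lemma is_inverse_unique_r x y z : is_inverse x y -> x * z = 1 -> z = y.
Proof. by move=> [_ yx] xz; rewrite -[z]mul1r -yx -mulrA xz mulr1. Qed.

Lemma is_inverse_unique_l x y z : is_inverse x y -> z * x = 1 -> z = y.
Proof. by move=> [xy _] zx; rewrite -[z]mulr1 -xy mulrA zx mul1r. Qed.

Lemma rmorph_is_inverse (B : pzRingType) (f : {rmorphism A -> B}) x y :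
  is_inverse x y -> is_inverse (f x) (f y).
Proof. by move=> [xy yx]; split; rewrite -rmorphM ?xy ?yx rmorph1. Qed.

End Inverses.

Lemma inj_surj_bijective (A B : Type) (f : A -> B) :
  injective f -> (forall y, exists x, f x = y) -> bijective f.
Proof.
move=> f_inj f_surj; exists (fun y => sval (cid (f_surj y))) => [x | y].
  by apply: f_inj; case: cid.
by case: cid.
Qed.

Definition image_set (A B : Type) (f : A -> B) (P : A -> Prop) : B -> Prop :=
  fun y => exists x, P x /\ f x = y.

Section Ideals.
Variables (R : pzRingType) (S : R -> Prop).
Implicit Types r s x y z : R.

(* [lreg_mod S b]: the image of S in R/b lies in C'_{R/b}. [ass_mod S b] is the
   preimage in R of ass_r of the image of S in R/b. *)
Definition lreg_mod (b : R -> Prop) := forall s x, S s -> b (s * x) -> b x.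
Definition rreg_mod (b : R -> Prop) := forall s x, S s -> b (x * s) -> b x.
Definition ass_mod (b : R -> Prop) : R -> Prop := fun r => exists t, S t /\ b (r * t).

Variable b : R -> Prop.
Hypothesis b_ideal : ideal b.

Lemma ideal0 : b 0. Proof. by case: b_ideal. Qed.

Lemma idealB x y : b x -> b y -> b (x - y).
Proof. by case: b_ideal => _ [bB _]; apply: bB. Qed.

Lemma idealMl r x : b x -> b (r * x).
Proof. by move=> bx; case: b_ideal => _ [_ /(_ r x bx)] []. Qed.

Lemma idealMr r x : b x -> b (x * r).
Proof. by move=> bx; case: b_ideal => _ [_ /(_ r x bx)] []. Qed.

Lemma idealN x : b x -> b (- x).
Proof. by rewrite -sub0r; apply: idealB ideal0. Qed.

Lemma idealD x y : b x -> b y -> b (x + y).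
Proof. by move=> bx /idealN; rewrite -[y in b (_ + y)]opprK; apply: idealB. Qed.

Lemma ideal_proper : (exists r, ~ b r) <-> ~ b 1.
Proof.
split=> [[r br] b1|b1]; last by exists 1.
by apply: br; rewrite -[r]mulr1; apply: idealMl.
Qed.

End Ideals.

Section AssociatedIdeal.
Variables (R : pzRingType) (S : R -> Prop).
Implicit Types r s x y : R.

Lemma aprime_ideal : ideal (aprime S).
Proof.
split; first by move=> b [].
split=> [x y ax ay b bI bS | r x ax].
  by apply: (idealB bI); [apply: ax | apply: ay].
by split=> b bI bS; [apply: (idealMl bI) | apply: (idealMr bI)]; apply: ax.
Qed.

Lemma aprime_lreg : lreg_mod S (aprime S).
Proof. by move=> s x Ss asx b bI bS; apply: (bS s) => //; apply: asx. Qed.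

Lemma ker_ideal (B : pzRingType) (f : {rmorphism R -> B}) : ideal (fun r => f r = 0).
Proof.
split; first exact: rmorph0.
split=> [x y fx fy|r x fx]; first by rewrite rmorphB fx fy subrr.
by rewrite !rmorphM fx mulr0 mul0r.
Qed.

Lemma aprime_sub_ker (B : pzRingType) (f : {rmorphism R -> B}) r :
  inverts f S -> aprime S r -> f r = 0.
Proof.
move=> f_inv /(_ _ (ker_ideal f)); apply=> s x /f_inv [y [_ yfs]].
by rewrite rmorphM => fsx; rewrite -[f x]mul1r -yfs -mulrA fsx mulr0.
Qed.

Section AssMod.
Variable b : R -> Prop.
Hypotheses (S_ore : right_Ore S) (b_ideal : ideal b) (b_lreg : lreg_mod S b).

Let SM s t : S s -> S t -> S (s * t).
Proof. by case: S_ore => -[_ [_ SM]] _; apply: SM. Qed.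

Lemma ass_mod_ideal : ideal (ass_mod S b).
Proof.
split; first by exists 1; rewrite mul0r; split; [case: S_ore => -[] | apply: ideal0].
split=> [x y [u [Su bxu]] [w [Sw byw]] | r x [u [Su bxu]]].
  have [u' [v [Su' e]]] := S_ore.2 w u Su.
  exists (w * u'); split; first exact: SM.
  by rewrite mulrBl {1}e !mulrA; apply: (idealB b_ideal); apply: (idealMr b_ideal).
have [u' [v [Su' e]]] := S_ore.2 r u Su.
split; first by exists u; split => //; rewrite -mulrA; apply: (idealMl b_ideal).
by exists u'; split => //; rewrite -mulrA e mulrA; apply: (idealMr b_ideal).
Qed.

Lemma ass_mod_lreg : lreg_mod S (ass_mod S b).
Proof.
move=> s x Ss [u [Su bsxu]]; exists u; split => //.
by apply: (b_lreg Ss); rewrite mulrA.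
Qed.

Lemma ass_mod_rreg : rreg_mod S (ass_mod S b).
Proof.
move=> s x Ss [u [Su bxsu]]; exists (s * u); split; first exact: SM.
by rewrite mulrA.
Qed.

Lemma ass_mod_sub_ker (B : pzRingType) (f : {rmorphism R -> B}) r :
  inverts f S -> (forall x, b x -> f x = 0) -> ass_mod S b r -> f r = 0.
Proof.
move=> f_inv fb [u [/f_inv [y [fuy _]] /fb]]; rewrite rmorphM => fru.
by rewrite -[f r]mulr1 -fuy mulrA fru mul0r.
Qed.

End AssMod.

Lemma ass_mod_aprime_sub_ker (B : pzRingType) (f : {rmorphism R -> B}) r :
  inverts f S -> ass_mod S (aprime S) r -> f r = 0.
Proof.
by move=> f_inv; apply: ass_mod_sub_ker f_inv (fun _ => aprime_sub_ker f_inv).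
Qed.

End AssociatedIdeal.

Section RightFractions.
Variables (R : pzRingType) (S : R -> Prop).
Hypothesis S_ore : right_Ore S.
Implicit Types a b r s t x y z : R.

Local Notation N := (ass_mod S (aprime S)).
Let N_ideal : ideal N := ass_mod_ideal S_ore (aprime_ideal S).
Let N_lreg : lreg_mod S N := ass_mod_lreg (aprime_lreg (S := S)).
Let N_rreg : rreg_mod S N := ass_mod_rreg S_ore (b := aprime S).

Let S1 : S 1. Proof. by case: S_ore => -[]. Qed.
Let SM s t : S s -> S t -> S (s * t).
Proof. by case: S_ore => -[_ [_ SM]] _; apply: SM. Qed.

Local Notation cong x y := (N (x - y)).

Lemma cong_refl x : cong x x. Proof. by rewrite subrr; apply: (ideal0 N_ideal). Qed.

Lemma cong_sym x y : cong x y -> cong y x.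
Proof. by move/(idealN N_ideal); rewrite opprB. Qed.

Lemma cong_trans x y z : cong x y -> cong y z -> cong x z.
Proof. by move=> Nxy Nyz; have := idealD N_ideal Nxy Nyz; rewrite addrA subrK. Qed.

Lemma congD x x' y y' : cong x x' -> cong y y' -> cong (x + y) (x' + y').
Proof. by move=> Nx Ny; have := idealD N_ideal Nx Ny; rewrite opprD addrACA. Qed.

Lemma congN x y : cong x y -> cong (- x) (- y).
Proof. by rewrite -opprD; apply: (idealN N_ideal). Qed.

Lemma congMl z x y : cong x y -> cong (z * x) (z * y).
Proof. by rewrite -mulrBr; apply: (idealMl N_ideal). Qed.

Lemma congMr z x y : cong x y -> cong (x * z) (y * z).
Proof. by rewrite -mulrBl; apply: (idealMr N_ideal). Qed.

Lemma cong_lreg s x y : S s -> cong (s * x) (s * y) -> cong x y.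
Proof. by rewrite -mulrBr => /N_lreg; apply. Qed.

Lemma cong_rreg s x y : S s -> cong (x * s) (y * s) -> cong x y.
Proof. by rewrite -mulrBl => /N_rreg; apply. Qed.

(* [(a, s) ~ (b, t)] encodes a s^-1 = b t^-1 modulo N. Quantifying over all c, d
   instead of over some Ore witness makes symmetry immediate and transitivity a
   single Ore step. *)
Definition frac_eqv (p q : R * R) :=
  forall c d, cong (p.2 * c) (q.2 * d) -> cong (p.1 * c) (q.1 * d).

Lemma frac_eqv_refl p : S p.2 -> frac_eqv p p.
Proof. by move=> Sp c d /(cong_lreg Sp); apply: congMl. Qed.

Lemma frac_eqv_sym p q : frac_eqv p q -> frac_eqv q p.
Proof. by move=> pq c d /cong_sym /pq /cong_sym. Qed.

Lemma frac_eqv_trans p q (r : R * R) :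
  S q.2 -> frac_eqv p q -> frac_eqv q r -> frac_eqv p r.
Proof.
move=> Sq pq qr c d pr; have [u [v [Su e]]] := S_ore.2 (p.2 * c) _ Sq.
have pq' : cong (p.1 * (c * u)) (q.1 * v).
  by apply: pq; rewrite mulrA e; apply: cong_refl.
have qr' : cong (q.1 * v) (r.1 * (d * u)).
  by apply: qr; rewrite -e mulrA; apply: congMr.
by apply: (cong_rreg Su); rewrite -!mulrA; apply: cong_trans qr'.
Qed.

(* Pairs whose denominator is not in S are identified with 0/1, so that the
   quotient has no junk class. *)
Definition frac_norm (p : R * R) := if `[< S p.2 >] then p else (0, 1).

Lemma frac_norm_den p : S (frac_norm p).2.
Proof. by rewrite /frac_norm; case: asboolP. Qed.

Lemma frac_normE p : S p.2 -> frac_norm p = p.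
Proof. by move=> Sp; rewrite /frac_norm asboolT. Qed.

Definition frac_rel : rel (R * R) :=
  fun p q => `[< frac_eqv (frac_norm p) (frac_norm q) >].

Lemma frac_rel_refl : reflexive frac_rel.
Proof. by move=> p; apply/asboolP/frac_eqv_refl/frac_norm_den. Qed.

Lemma frac_rel_sym : symmetric frac_rel.
Proof. by move=> p q; apply/asboolP/asboolP => /frac_eqv_sym. Qed.

Lemma frac_rel_trans : transitive frac_rel.
Proof.
move=> q p r /asboolP pq /asboolP qr; apply/asboolP.
exact: frac_eqv_trans (frac_norm_den q) pq qr.
Qed.

Canonical frac_rel_equiv := EquivRel frac_rel frac_rel_refl frac_rel_sym frac_rel_trans.

(* The ring R'S'^-1 of the paper, built directly on pairs of elements of R. *)
Definition rfrac := {eq_quot frac_rel}.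
HB.instance Definition _ := Choice.on rfrac.

Definition frac a s : rfrac := \pi_rfrac (a, s).
Definition num (X : rfrac) := (frac_norm (repr X)).1.
Definition den (X : rfrac) := (frac_norm (repr X)).2.

Lemma den_S X : S (den X). Proof. exact: frac_norm_den. Qed.

Lemma frac_eq a s b t : S s -> S t ->
  frac a s = frac b t <-> frac_eqv (a, s) (b, t).
Proof.
move=> Ss St; rewrite /frac; split=> [/eqmodP/asboolP | eqv].
  by rewrite !frac_normE.
by apply/eqmodP/asboolP; rewrite !frac_normE.
Qed.

Lemma fracK X : frac (num X) (den X) = X.
Proof.
rewrite /frac -surjective_pairing -[RHS]reprK; apply/eqmodP/asboolP.
rewrite frac_normE; last exact: frac_norm_den.
exact: frac_eqv_refl (frac_norm_den _).
Qed.

Lemma frac_ind (P : rfrac -> Prop) : (forall a s, S s -> P (frac a s)) -> forall X, P X.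
Proof. by move=> PS X; rewrite -(fracK X); apply/PS/den_S. Qed.

Lemma frac_eqv_repr a s : S s -> frac_eqv (num (frac a s), den (frac a s)) (a, s).
Proof. by move=> Ss; apply/frac_eq; rewrite ?fracK //; apply: den_S. Qed.

Definition ore_sol r s (p : R * R) := S p.1 /\ r * p.1 = s * p.2.
Definition ore r s : R * R := xget (1, 0) (ore_sol r s).

Lemma oreP r s : S s -> ore_sol r s (ore r s).
Proof.
move=> Ss; apply: xgetPex; have [u [v [Su e]]] := S_ore.2 r s Ss.
by exists (u, v).
Qed.

Lemma common_den s t : S s -> S t -> exists c d, S (s * c) /\ s * c = t * d.
Proof.
move=> Ss St; have [u [v [Su e]]] := S_ore.2 t s Ss.
by exists v, u; rewrite -e; split => //; apply: SM.
Qed.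

Lemma common_den3 s t w : S s -> S t -> S w ->
  exists m x y z, [/\ S m, s * x = m, t * y = m & w * z = m].
Proof.
move=> Ss St Sw; have [x [y [Sm e]]] := common_den Ss St.
have [x' [z [Sn e']]] := common_den Sm Sw.
exists (s * x * x'), (x * x'), (y * x'), z.
by split; rewrite // mulrA // -e.
Qed.

Lemma frac_expand a s x m : S s -> S m -> s * x = m -> frac a s = frac (a * x) m.
Proof.
move=> Ss Sm e; apply/frac_eq => // c d /= h.
by rewrite -mulrA; apply/congMl/(cong_lreg Ss); rewrite mulrA e.
Qed.

Definition addf X Y :=
  let o := ore (den Y) (den X) in frac (num X * o.2 + num Y * o.1) (den Y * o.1).

Lemma frac_eqv_add p q p' q' c d c' d' m m' :
  frac_eqv p p' -> frac_eqv q q' -> p.2 * c = m -> q.2 * d = m ->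
  p'.2 * c' = m' -> q'.2 * d' = m' ->
  frac_eqv (p.1 * c + q.1 * d, m) (p'.1 * c' + q'.1 * d', m').
Proof.
move=> pp qq ec ed ec' ed' x y /= h; rewrite !mulrDl -!mulrA.
by apply: congD; [apply: pp | apply: qq]; rewrite !mulrA ?ec ?ec' ?ed ?ed'.
Qed.

Lemma addf_frac a s b t c d m : S s -> S t -> S m -> s * c = m -> t * d = m ->
  addf (frac a s) (frac b t) = frac (a * c + b * d) m.
Proof.
move=> Ss St Sm ec ed; rewrite /addf.
have [So eo] := oreP (den (frac b t)) (den_S (frac a s)).
apply/frac_eq => //; first exact: SM (den_S _) So.
exact (frac_eqv_add (frac_eqv_repr Ss) (frac_eqv_repr St) (esym eo) erefl ec ed).
Qed.

Lemma addf_same a b s : S s -> addf (frac a s) (frac b s) = frac (a + b) s.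
Proof. by move=> Ss; rewrite (@addf_frac _ _ _ _ 1 1 s) ?mulr1. Qed.

Definition oppf X := frac (- num X) (den X).

Lemma oppf_frac a s : S s -> oppf (frac a s) = frac (- a) s.
Proof.
move=> Ss; apply/frac_eq => //; first exact: den_S.
by move=> c d /(frac_eqv_repr Ss) /=; rewrite !mulNr; apply: congN.
Qed.

Lemma addfA : associative addf.
Proof.
elim/frac_ind=> a s Ss; elim/frac_ind=> b t St; elim/frac_ind=> c w Sw.
have [m [x [y [z [Sm ex ey ez]]]]] := common_den3 Ss St Sw.
rewrite (frac_expand a Ss Sm ex) (frac_expand b St Sm ey) (frac_expand c Sw Sm ez).
by rewrite !addf_same // addrA.
Qed.

Lemma addfC : commutative addf.
Proof.
elim/frac_ind=> a s Ss; elim/frac_ind=> b t St.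
have [c [d [Sm e]]] := common_den Ss St.
rewrite (frac_expand a Ss Sm erefl) (frac_expand b St Sm (esym e)).
by rewrite !addf_same // addrC.
Qed.

Lemma add0f : left_id (frac 0 1) addf.
Proof.
elim/frac_ind=> a s Ss.
by rewrite (frac_expand 0 S1 Ss (mul1r s)) addf_same // mul0r add0r.
Qed.

Lemma addNf : left_inverse (frac 0 1) oppf addf.
Proof.
elim/frac_ind=> a s Ss.
by rewrite (frac_expand 0 S1 Ss (mul1r s)) oppf_frac // addf_same // mul0r addNr.
Qed.

HB.instance Definition _ := GRing.isZmodule.Build rfrac addfA addfC add0f addNf.

Lemma fracD a s b t c d m : S s -> S t -> S m -> s * c = m -> t * d = m ->
  frac a s + frac b t = frac (a * c + b * d) m.
Proof. exact: addf_frac. Qed.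

Lemma fracN a s : S s -> - frac a s = frac (- a) s.
Proof. exact: oppf_frac. Qed.

Lemma frac0 : frac 0 1 = 0. Proof. by []. Qed.

(* s^-1 b = v u^-1 as soon as b u = s v. *)
Definition mulf X Y :=
  let o := ore (num Y) (den X) in frac (num X * o.2) (den Y * o.1).

Lemma frac_eqv_mul p q p' q' u v u' v' :
  frac_eqv p p' -> frac_eqv q q' -> q.1 * u = p.2 * v -> q'.1 * u' = p'.2 * v' ->
  frac_eqv (p.1 * v, q.2 * u) (p'.1 * v', q'.2 * u').
Proof.
move=> pp qq e e' x y /= h.
have qq' : cong (q.1 * (u * x)) (q'.1 * (u' * y)) by apply: qq; rewrite !mulrA.
by rewrite -!mulrA; apply: pp; rewrite !mulrA -e -e' -!mulrA.
Qed.

Lemma mulf_frac a s b t u v : S s -> S t -> S u -> b * u = s * v ->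
  mulf (frac a s) (frac b t) = frac (a * v) (t * u).
Proof.
move=> Ss St Su e; rewrite /mulf.
have [So eo] := oreP (num (frac b t)) (den_S (frac a s)).
apply/frac_eq; [exact: SM (den_S _) So | exact: SM |].
exact (frac_eqv_mul (frac_eqv_repr Ss) (frac_eqv_repr St) eo e).
Qed.

Ltac solve_S := solve [repeat (assumption || apply: SM)].

Lemma mulfA : associative mulf.
Proof.
elim/frac_ind=> a s Ss; elim/frac_ind=> b t St; elim/frac_ind=> c w Sw.
have [u3 [v3 [Su3 e3]]] := S_ore.2 c _ St.
have [u1 [v1 [Su1 e1]]] := S_ore.2 b _ Ss.
have [u4 [v4 [Su4 e4]]] := S_ore.2 v3 _ Su1.
rewrite (mulf_frac b St Sw Su3 e3) (mulf_frac a Ss St Su1 e1).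
rewrite (@mulf_frac a s (b * v3) (w * u3) u4 (v1 * v4)); try solve_S; last first.
  by rewrite -mulrA e4 mulrA e1 mulrA.
rewrite (@mulf_frac (a * v1) (t * u1) c w (u3 * u4) v4); try solve_S; last first.
  by rewrite mulrA e3 -!mulrA e4.
by rewrite !mulrA.
Qed.

Lemma mul1f : left_id (frac 1 1) mulf.
Proof.
elim/frac_ind=> b t St.
by rewrite (@mulf_frac 1 1 b t 1 b) ?mul1r ?mulr1.
Qed.

Lemma mulf1 : right_id (frac 1 1) mulf.
Proof.
elim/frac_ind=> a s Ss.
by rewrite (@mulf_frac a s 1 1 s 1) ?mul1r ?mulr1.
Qed.

Lemma mulfDl : left_distributive mulf addf.
Proof.
elim/frac_ind=> a s Ss; elim/frac_ind=> b t St; elim/frac_ind=> c w Sw.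
have [x [y [Sm e]]] := common_den Ss St.
rewrite (frac_expand a Ss Sm erefl) (frac_expand b St Sm (esym e)) addf_same //.
have [u [v [Su ev]]] := S_ore.2 c _ Sm.
by rewrite !(mulf_frac _ _ Sw Su ev) ?addf_same ?mulrDl; try solve_S.
Qed.

Lemma mulfDr : right_distributive mulf addf.
Proof.
elim/frac_ind=> a s Ss; elim/frac_ind=> b t St; elim/frac_ind=> c w Sw.
have [x [y [Sm e]]] := common_den St Sw.
rewrite (frac_expand b St Sm erefl) (frac_expand c Sw Sm (esym e)) addf_same //.
have [u1 [v1 [Su1 e1]]] := S_ore.2 (b * x) _ Ss.
have [u2 [v2 [Su2 e2]]] := S_ore.2 (c * y * u1) _ Ss.
rewrite (@mulf_frac a s (b * x + c * y) _ (u1 * u2) (v1 * u2 + v2));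
  try solve_S; last first.
  by rewrite mulrDl mulrDr mulrA e1 mulrA e2 mulrA.
rewrite (@mulf_frac a s (b * x) _ (u1 * u2) (v1 * u2)); try solve_S; last first.
  by rewrite mulrA e1 mulrA.
rewrite (@mulf_frac a s (c * y) _ (u1 * u2) v2); try solve_S; last by rewrite mulrA e2.
by rewrite addf_same ?mulrDr; try solve_S.
Qed.

HB.instance Definition _ :=
  GRing.Zmodule_isPzRing.Build rfrac mulfA mul1f mulf1 mulfDl mulfDr.

Lemma fracM a s b t u v : S s -> S t -> S u -> b * u = s * v ->
  frac a s * frac b t = frac (a * v) (t * u).
Proof. exact: mulf_frac. Qed.

Lemma frac_id s : S s -> frac s s = 1.
Proof. by move=> Ss; rewrite -{1}[s]mul1r -(frac_expand 1 S1 Ss (mul1r s)). Qed.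

Definition tofrac r := frac r 1.

Lemma tofrac_is_zmod : zmod_morphism tofrac.
Proof.
by move=> x y; rewrite /tofrac fracN // (fracD _ _ S1 S1 S1 (mulr1 1) (mulr1 1)) !mulr1.
Qed.

Lemma tofrac_is_monoid : monoid_morphism tofrac.
Proof.
split=> // x y; rewrite /tofrac (@fracM x 1 y 1 1 y) ?mulr1 //.
by rewrite mul1r.
Qed.

HB.instance Definition _ :=
  GRing.isZmodMorphism.Build R rfrac tofrac tofrac_is_zmod.
HB.instance Definition _ :=
  GRing.isMonoidMorphism.Build R rfrac tofrac tofrac_is_monoid.

Lemma tofrac_inverse s : S s -> is_inverse (tofrac s) (frac 1 s).
Proof.
move=> Ss; split; first by rewrite (@fracM s 1 1 s 1 1) ?mulr1 ?frac_id.
by rewrite (@fracM 1 s s 1 1 1) ?mulr1.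
Qed.

Lemma tofrac_inverts : inverts tofrac S.
Proof. by move=> s Ss; exists (frac 1 s); apply: tofrac_inverse. Qed.

Lemma frac_decomp a s : S s -> frac a s = tofrac a * frac 1 s.
Proof. by move=> Ss; rewrite (@fracM a 1 1 s 1 1) ?mulr1. Qed.

Lemma tofrac_eq0 r : tofrac r = 0 -> N r.
Proof.
rewrite -frac0 => /(frac_eq _ _ S1 S1) /(_ 1 1 (cong_refl _)).
by rewrite /= !mulr1 subr0.
Qed.

Section Lift.
Variables (B : pzRingType) (f : {rmorphism R -> B}).
Hypothesis f_inv : inverts f S.

Let f_N r : N r -> f r = 0 := ass_mod_aprime_sub_ker f_inv.

Definition finv s := xget 0 (is_inverse (f s)).

Lemma finvP s : S s -> is_inverse (f s) (finv s).
Proof. by move=> /f_inv; apply: xgetPex. Qed.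

Lemma finvMr s c : S s -> S (s * c) -> f c * finv (s * c) = finv s.
Proof.
move=> Ss Ssc; apply: is_inverse_unique_r (finvP Ss) _.
by rewrite mulrA -rmorphM; case: (finvP Ssc).
Qed.

Lemma finvM s t : S s -> S t -> finv (s * t) = finv t * finv s.
Proof.
move=> Ss St; apply/esym/is_inverse_unique_l; first exact/finvP/SM.
rewrite rmorphM mulrA -(mulrA _ _ (f s)); case: (finvP Ss) => _ ->.
by rewrite mulr1; case: (finvP St).
Qed.

Lemma finv1 : finv 1 = 1.
Proof. by apply/esym/(is_inverse_unique_r (finvP S1)); rewrite rmorph1 mulr1. Qed.

Lemma f_cong x y : cong x y -> f x = f y.
Proof. by move/f_N/eqP; rewrite rmorphB subr_eq0 => /eqP. Qed.

Definition lift X := f (num X) * finv (den X).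

Lemma lift_frac a s : S s -> lift (frac a s) = f a * finv s.
Proof.
move=> Ss; rewrite /lift; have := frac_eqv_repr (a := a) Ss.
have := den_S (frac a s); move: (num _) (den _) => n d Sd nd.
have [u [v [Su e]]] := S_ore.2 s _ Sd.
have /f_cong fna : cong (n * v) (a * u) by apply: nd; rewrite /= -e; apply: cong_refl.
have Sdv : S (d * v) by rewrite -e; apply: SM.
rewrite -(finvMr Sd Sdv) mulrA -rmorphM fna -e rmorphM -mulrA finvMr //.
exact: SM.
Qed.

Lemma lift_is_zmod : zmod_morphism lift.
Proof.
elim/frac_ind=> a s Ss; elim/frac_ind=> b t St.
have [u [v [Su e]]] := S_ore.2 t _ Ss.
have Ssv : S (s * v) by rewrite -e; apply: SM.
rewrite fracN // (fracD _ _ Ss St Ssv erefl e) !lift_frac //.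
rewrite rmorphD !rmorphM rmorphN mulrDl !mulNr -!mulrA finvMr // -e finvMr //.
exact: SM.
Qed.

Lemma lift_is_monoid : monoid_morphism lift.
Proof.
split; first by rewrite -(frac_id S1) lift_frac // rmorph1 mul1r finv1.
elim/frac_ind=> a s Ss; elim/frac_ind=> b t St.
have [u [v [Su e]]] := S_ore.2 b _ Ss.
have finv_f : finv s * f b = f v * finv u.
  rewrite -[LHS]mulr1; case: (finvP Su) => <- _.
  rewrite mulrA -(mulrA _ (f b)) -rmorphM e rmorphM mulrA.
  by case: (finvP Ss) => _ ->; rewrite mul1r.
rewrite (fracM _ Ss St Su e) !lift_frac ?finvM //; last exact: SM.
by rewrite rmorphM -!mulrA (mulrA (finv s)) finv_f !mulrA.
Qed.

Lemma lift_tofrac r : lift (tofrac r) = f r.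
Proof. by rewrite lift_frac // finv1 mulr1. Qed.

End Lift.
End RightFractions.

Section Images.
Variables (R R' : pzRingType) (S b : R -> Prop) (pi : {rmorphism R -> R'}).
Hypothesis pi_ker : forall r, pi r = 0 <-> b r.

Lemma right_denominator_image : right_Ore S -> lreg_mod S b -> ~ b 1 ->
  (forall y, exists r, pi r = y) -> right_denominator (image_set pi S).
Proof.
move=> [[S1 [_ SM]] S_ore] b_lreg b1 pi_surj.
have S'1 : image_set pi S 1 by exists 1; split => //; apply: rmorph1.
split; first split; first split => //; first split.
- by move=> [s [Ss /pi_ker bs]]; apply/b1/(b_lreg _ _ Ss); rewrite mulr1.
- move=> _ _ [s [Ss <-]] [t [St <-]].
  by exists (s * t); split; [exact: SM | exact: rmorphM].
- move=> y _ [s [Ss <-]]; have [r <-] := pi_surj y.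
  have [u [v [Su e]]] := S_ore r s Ss.
  by exists (pi u), (pi v); split; [exists u | rewrite -!rmorphM e].
move=> _ y [s [Ss <-]]; have [r <-] := pi_surj y.
rewrite -rmorphM => /pi_ker /(b_lreg _ _ Ss) br.
by exists 1; split => //; rewrite mulr1; apply/pi_ker.
Qed.

Lemma ass_r_image r : ass_mod S b r <-> ass_r (image_set pi S) (pi r).
Proof.
split=> [[u [Su bru]] | [_ [[u [Su <-]]]]].
  by exists (pi u); split; [exists u | rewrite -rmorphM; apply/pi_ker].
by rewrite -rmorphM => /pi_ker bru; exists u.
Qed.

End Images.

Section UniversalInverting.
Variables (R : pzRingType) (S : R -> Prop) (S_ore : right_Ore S).
Variables (L : pzRingType) (iota : {rmorphism R -> L}).
Hypothesis iota_univ : universal_inverting S iota.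
Implicit Types r s : R.

Let iota_inv : inverts iota S := iota_univ.1.

HB.instance Definition _ := GRing.isZmodMorphism.Build (rfrac S_ore) L (lift iota)
  (lift_is_zmod iota_inv).
HB.instance Definition _ := GRing.isMonoidMorphism.Build (rfrac S_ore) L (lift iota)
  (lift_is_monoid S_ore iota_inv).

Lemma universal_tofrac : exists g : {rmorphism L -> rfrac S_ore},
  (forall r, g (iota r) = tofrac S_ore r) /\ (forall q, lift iota (g q) = q).
Proof.
have [g [g_iota _]] := iota_univ.2 _ (tofrac S_ore) (tofrac_inverts S_ore).
exists g; split => // q; have [h [_ h_uniq]] := iota_univ.2 _ iota iota_inv.
have lift_g_eq : forall x, (lift iota \o g) x = h x.
  by apply: h_uniq => r /=; rewrite g_iota; apply: lift_tofrac.
have id_eq : forall x, idfun x = h x by apply: h_uniq.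
by rewrite -[q in RHS]/(idfun q) id_eq -lift_g_eq.
Qed.

Lemma universal_frac_form q :
  exists r s y, S s /\ is_inverse (iota s) y /\ q = iota r * y.
Proof.
have [g [_ gK]] := universal_tofrac; rewrite -(gK q).
elim/frac_ind: (g q) => a s Ss; exists a, s, (lift iota (frac S_ore 1 s)).
split=> //; split.
  rewrite -(lift_tofrac S_ore iota_inv s).
  exact: rmorph_is_inverse (tofrac_inverse S_ore Ss).
by rewrite (frac_decomp S_ore a Ss) rmorphM; congr (_ * _); apply: lift_tofrac.
Qed.

Lemma universal_kerE r : iota r = 0 <-> ass_mod S (aprime S) r.
Proof.
split=> [iota_r0 | ]; last exact: ass_mod_aprime_sub_ker.
have [g [g_iota _]] := universal_tofrac.
by apply: tofrac_eq0; rewrite -g_iota iota_r0 rmorph0.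
Qed.

Lemma right_localizable_iff : right_localizable S iota <-> ~ aprime S 1.
Proof.
split=> [[one_neq0 _] a'1 | a'1].
  by apply: one_neq0; rewrite -(rmorph1 iota); apply: aprime_sub_ker iota_inv a'1.
split; last exact: universal_frac_form.
rewrite -(rmorph1 iota) => /universal_kerE [u [Su a'u]]; apply: a'1.
by apply: (aprime_lreg Su); rewrite mulr1; rewrite mul1r in a'u.
Qed.

Lemma universal_localization_iso (R' : pzRingType) (pi : {rmorphism R -> R'})
    (Q : pzRingType) (sigma : {rmorphism R' -> Q}) :
  (forall y, exists r, pi r = y) ->
  (forall r, iota r = 0 <-> ass_r (image_set pi S) (pi r)) ->
  right_Ore_localization (image_set pi S) sigma ->
  exists g : {rmorphism L -> Q}, bijective g /\ (forall r, g (iota r) = sigma (pi r)).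
Proof.
move=> pi_surj kerE [sigma_inv [sigma_frac sigma_ker]].
have sigma_pi_inv : inverts (sigma \o pi) S.
  by move=> s Ss; apply: sigma_inv; exists s.
have [g [g_iota _]] := iota_univ.2 _ _ sigma_pi_inv.
have g_inv s y : is_inverse (iota s) y -> is_inverse (sigma (pi s)) (g y).
  by move/(rmorph_is_inverse g); rewrite g_iota.
have g_ker x : g x = 0 -> x = 0.
  have [r [s [y [Ss [sy ->]]]]] := universal_frac_form x.
  rewrite rmorphM g_iota => gx0.
  have : sigma (pi r) = 0.
    by have [_ ys] := g_inv _ _ sy; rewrite -[LHS]mulr1 -ys mulrA gx0 mul0r.
  by move/sigma_ker/kerE => ->; rewrite mul0r.
exists g; split=> //; apply: inj_surj_bijective => [x x' gxx' | q].
  by apply/eqP; rewrite -subr_eq0; apply/eqP/g_ker; rewrite rmorphB gxx' subrr.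
have [b [_ [z [[s [Ss <-]] [sz ->]]]]] := sigma_frac q.
have [r <-] := pi_surj b; have [y sy] := iota_inv Ss.
exists (iota r * y); rewrite rmorphM g_iota; congr (_ * _).
by apply: is_inverse_unique_r sz _; case: (g_inv _ _ sy).
Qed.

End UniversalInverting.

Theorem theorem2p11 (R : pzRingType) (S : R -> Prop)
    (L : pzRingType) (iota : {rmorphism R -> L}) :
  right_Ore S -> universal_inverting S iota ->
  let a : R -> Prop := fun r => iota r = 0 in
  let a' : R -> Prop := aprime S in
  (right_localizable S iota <-> exists r, ~ a' r) /\
  ((exists r, ~ a' r) ->
   forall (R' : pzRingType) (pi' : {rmorphism R -> R'}),
     (forall y : R', exists r, pi' r = y) ->
     (forall r, pi' r = 0 <-> a' r) ->
     let S' : R' -> Prop := fun y => exists s, S s /\ pi' s = y in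
     right_denominator S' /\
     (forall r, a r <-> ass_r S' (pi' r)) /\
     (forall (Q : pzRingType) (sigma : {rmorphism R' -> Q}),
        right_Ore_localization S' sigma ->
        exists g : {rmorphism L -> Q},
          bijective g /\ (forall r, g (iota r) = sigma (pi' r)))).
Proof.
move=> S_ore iota_univ a a'.
have a'_proper := ideal_proper (aprime_ideal S).
split.
  exact: iff_trans (right_localizable_iff S_ore iota_univ) (iff_sym a'_proper).
move=> /a'_proper a'1 R' pi' pi_surj pi_ker S'.
have kerE r : a r <-> ass_r S' (pi' r).
  exact: iff_trans (universal_kerE S_ore iota_univ r) (ass_r_image S pi_ker r).
split.
  exact: right_denominator_image pi_ker S_ore (aprime_lreg (S := S)) a'1 pi_surj.
by split=> // Q sigma; apply: universal_localization_iso.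
Qed.
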